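(* Let $p$ be a prime, let $e\geq2$ and $d\geq2$ be integers, and let $\mathcal P(p^e,d)\subset\mathbb R^d$ be the convex hull of all $d$-dimensional vector-factorisations of $p^e$ (its vertices are exactly these vector-factorisations $(p^{\beta_1},\dots,p^{\beta_d})$ with $\beta\in\mathbb N^d$, $\sum_i\beta_i=e$). Let $S$ be a non-empty set of vertices of $\mathcal P(p^e,d)$, and define $m(S)=(m_1,\dots,m_d)$ and $M(S)=(M_1,\dots,M_d)$ by $m_i=\min_{(p^{\beta_1},\dots,p^{\beta_d})\in S}\beta_i$ and $M_i=\max_{(p^{\beta_1},\dots,p^{\beta_d})\in S}\beta_i$. If $M(S)-m(S)\in\{0,1\}^d$, then $S$ is contained in the set of vertices of a regular facet of $\mathcal P(p^e,d)$.
   Context: $\mathbb N=\{0,1,2,\dots\}$. A $d$-dimensional vector-factorisation of $N\geq1$ is a vector $(v_1,\dots,v_d)\in\mathbb N^d$ with $v_1\cdots v_d=N$. For $\lambda\in\{1,\dots,\min(e,d-1)\}$, $\mathcal R_\lambda(d,e)$ is the set of all $\alpha\in\mathbb N^d$ with $\min(\alpha_1,\dots,\alpha_d)=0$, $\max(\alpha_1,\dots,\alpha_d)\,d<e+\sum_i\alpha_i$ and $e+\sum_i\alpha_i\equiv\lambda\pmod d$; for such $\alpha$, $\mu(\alpha)$ is the integer with $\mu(\alpha)d+\lambda=e+\sum_i\alpha_i$. A regular facet of $\mathcal P(p^e,d)$ is a facet of the form $F_\alpha=\{x\in\mathcal P(p^e,d):\sum_{i=1}^dp^{\alpha_i}x_i=\lambda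 p^{\mu(\alpha)+1}+(d-\lambda)p^{\mu(\alpha)}\}$ for some $\lambda\in\{1,\dots,\min(e,d-1)\}$ and $\alpha\in\mathcal R_\lambda(d,e)$; equivalently, the convex hull of $\{(p^{\mu-\alpha_1+\epsilon_1},\dots,p^{\mu-\alpha_d+\epsilon_d}):\epsilon\in\{0,1\}^d,\sum_i\epsilon_i=\lambda\}$ with $\mu=\mu(\alpha)$. *)

From mathcomp Require Import all_boot.
Set Implicit Arguments. Unset Strict Implicit. Unset Printing Implicit Defensive.

(* Vertices of P(p^e,d) are the points (p^b_1,...,p^b_d) with b : 'I_d -> nat
   and \sum_i b_i = e; we represent a vertex by its exponent vector b. *)
Definition is_vertex_exp (d e : nat) (b : {ffun 'I_d -> nat}) : Prop :=
  \sum_(i < d) b i = e.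

(* M(S)_i and m(S)_i for a non-empty list S of exponent vectors.
   (The seed of the min is M(S)_i, which is neutral for min on S.) *)
Definition MaxS (d : nat) (S : seq {ffun 'I_d -> nat}) (i : 'I_d) : nat :=
  \max_(b <- S) b i.
Definition MinS (d : nat) (S : seq {ffun 'I_d -> nat}) (i : 'I_d) : nat :=
  \big[minn/MaxS S i]_(b <- S) b i.

Definition in_R (d e lam : nat) (alpha : 'I_d -> nat) : Prop :=
  (exists i : 'I_d, alpha i = 0) /\
  (forall i : 'I_d, alpha i * d < e + \sum_(j < d) alpha j) /\
  (e + \sum_(j < d) alpha j = lam %[mod d]).

(* mu(alpha): the integer with mu * d + lambda = e + \sum alpha *)
Definition mu (d e lam : nat) (alpha : 'I_d -> nat) : nat :=
  (e + \sum_(j < d) alpha j - lam) %/ d.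

(* b is (the exponent vector of) a vertex of the regular facet F_alpha, i.e.
   (p^b_i)_i = (p^(mu - alpha_i + eps_i))_i for some eps in {0,1}^d with
   \sum eps = lambda; written additively as b_i + alpha_i = mu + eps_i. *)
Definition vertex_of_regular_facet (d e lam : nat) (alpha : 'I_d -> nat)
    (b : {ffun 'I_d -> nat}) : Prop :=
  exists eps : 'I_d -> bool,
    \sum_(i < d) (eps i : nat) = lam /\
    forall i : 'I_d, b i + alpha i = mu e lam alpha + eps i.

(* All of S lies in a box [m, m + 1] (coordinatewise) with m = m(S), so each
   vertex b of S is m plus the indicator of the coordinates where it exceeds
   m; since \sum b = e, all of them exceed m in the same number t of
   coordinates.  As m_i is attained, t < d.  If 1 <= t, then with c = max m,
   alpha = c - m and lambda = t one gets mu(alpha) = c and b + alpha = c + eps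
   with eps the excess indicator of b.  If t = 0, S is a single point, and
   lowering a positive coordinate of m by one reduces to the case t = 1. *)

From mathcomp Require Import all_boot zify.

Set Implicit Arguments.
Unset Strict Implicit.
Unset Printing Implicit Defensive.

Lemma bigminn_mem (T : eqType) (F : T -> nat) x (s : seq T) :
  \big[minn/x]_(c <- s) F c \in x :: map F s.
Proof.
elim: s => [|a s IH]; first by rewrite big_nil mem_head.
rewrite big_cons /minn; case: ltnP => _; first by rewrite !inE eqxx orbT.
by move: IH; rewrite !inE => /orP[->|->]; rewrite ?orbT.
Qed.

Lemma bigminn_le (T : eqType) (F : T -> nat) x (s : seq T) c :
  c \in s -> \big[minn/x]_(a <- s) F a <= F c.
Proof.
elim: s => [|a s IH] //; rewrite big_cons inE => /orP[/eqP ->|/IH].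
  exact: geq_minl.
exact: leq_trans (geq_minr _ _).
Qed.

Section RegularFacetOfBox.

Variable d : nat.
Implicit Types (S : seq {ffun 'I_d -> nat}) (f : 'I_d -> nat) (b : {ffun 'I_d -> nat}).

Definition in_box f b : Prop := forall i, f i <= b i <= (f i).+1.

Definition on_regular_facet (e : nat) S : Prop :=
  exists lam : nat, exists alpha : 'I_d -> nat,
    [/\ 1 <= lam, lam <= minn e d.-1, in_R e lam alpha &
        forall b, b \in S -> vertex_of_regular_facet e lam alpha b].

Lemma sum_in_box f b :
  in_box f b -> \sum_(i < d) b i = \sum_(i < d) f i + \sum_(i < d) (f i < b i : nat).
Proof.
move=> fb; rewrite -big_split; apply: eq_bigr => i _ /=.
by have := fb i; case: ltnP => /=; lia.
Qed.

Lemma regular_facet_of_box e S f t :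
  1 <= t <= d.-1 -> \sum_(i < d) f i + t = e ->
  (forall b, b \in S -> in_box f b) ->
  (forall b, b \in S -> is_vertex_exp e b) ->
  on_regular_facet e S.
Proof.
move=> /andP[t_gt0 t_le] sum_f box vert.
have d_gt0 : 0 < d by lia.
set c := \max_(i < d) f i.
have f_le_c i : f i <= c by exact: leq_bigmax.
have sum_alpha : e + \sum_(i < d) (c - f i) = c * d + t.
  rewrite -sum_f addnAC -big_split /= (eq_bigr (fun=> c)) => [|i _]; last first.
    by rewrite subnKC.
  by rewrite sum_nat_const card_ord mulnC.
have mu_alpha : mu e t (fun i => c - f i) = c by rewrite /mu sum_alpha addnK mulnK.
exists t, (fun i => c - f i); split => //.
- by rewrite leq_min t_le andbT -sum_f leq_addl.
- split; [|split].
  + have [i0 f_i0] := eq_bigmax f (ltac:(by rewrite card_ord)).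
    by exists i0; rewrite /c f_i0 subnn.
  + by move=> i; rewrite sum_alpha; have := f_le_c i; nia.
  + by rewrite sum_alpha modnMDl.
- move=> b bS; exists (fun i => f i < b i); split.
    by have := sum_in_box (box b bS); rewrite (vert b bS) -sum_f => /addnI.
  by move=> i; rewrite mu_alpha; have := box b bS i; have := f_le_c i; case: ltnP => /=; lia.
Qed.

Lemma MinS_le S b i : b \in S -> MinS S i <= b i.
Proof. exact: bigminn_le. Qed.

Lemma MinS_attained S i : S != [::] -> exists2 b, b \in S & b i = MinS S i.
Proof.
case: S => [|b0 S] // _; have := bigminn_mem (fun b => b i) (MaxS (b0 :: S) i) (b0 :: S).
rewrite -/(MinS _ i) inE => /orP[/eqP MinS_max|/mapP[b bS ->]]; last by exists b.
exists b0; rewrite ?mem_head //; apply/eqP; rewrite eqn_leq MinS_le ?mem_head //.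
by rewrite MinS_max (leq_bigmax_seq (F := fun b => b i)) ?mem_head.
Qed.

Lemma in_box_MinS S b :
  (forall i, MaxS S i - MinS S i <= 1) -> b \in S -> in_box (MinS S) b.
Proof.
move=> gap bS i; rewrite MinS_le //=.
have := leq_bigmax_seq (P := xpredT) (F := fun c : {ffun 'I_d -> nat} => c i) b bS isT.
by rewrite -/(MaxS S i); have := gap i; lia.
Qed.

Lemma sum_indicator_le_pred (P : pred 'I_d) i0 :
  ~~ P i0 -> \sum_(i < d) (P i : nat) <= d.-1.
Proof.
move=> nP; rewrite (bigD1 i0) //= (negbTE nP) add0n.
apply: (@leq_trans (\sum_(i < d | i != i0) 1)); first by apply: leq_sum => i _; case: (P i).
by rewrite sum1_card cardC1 card_ord.
Qed.

Lemma in_box_excess0 f b :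
  in_box f b -> \sum_(i < d) (f i < b i : nat) = 0 -> forall i, b i = f i.
Proof.
move=> fb /eqP; rewrite sum_nat_eq0 => /forallP excess0 i.
by have := excess0 i; have := fb i; case: ltnP => /=; lia.
Qed.

Definition decr_at f (j : 'I_d) : 'I_d -> nat := fun i => f i - (i == j).

Lemma in_box_decr_at f j b : (forall i, b i = f i) -> in_box (decr_at f j) b.
Proof. by move=> bf i; rewrite /decr_at bf; case: (i == j) => /=; lia. Qed.

Lemma sum_decr_at f j : 0 < f j -> \sum_(i < d) decr_at f j i + 1 = \sum_(i < d) f i.
Proof.
move=> fj; rewrite (bigD1 j) // [RHS](bigD1 j) //= /decr_at eqxx.
rewrite (eq_bigr f) => [|i /negbTE ->]; last exact: subn0.
by rewrite addnAC subn1 addn1 prednK.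
Qed.

End RegularFacetOfBox.

Theorem lemma5p2 (p e d : nat) (S : seq {ffun 'I_d -> nat}) :
  prime p -> 2 <= e -> 2 <= d ->
  S != [::] ->
  (forall b, b \in S -> is_vertex_exp e b) ->
  (forall i : 'I_d, MaxS S i - MinS S i <= 1) ->
  exists lam : nat, exists alpha : 'I_d -> nat,
    [/\ 1 <= lam, lam <= minn e d.-1, in_R e lam alpha &
        forall b, b \in S -> vertex_of_regular_facet e lam alpha b].
Proof.
(* In exponent coordinates the prime p plays no role. *)
move=> _ e_ge2 d_ge2 S_nil vert gap.
set m := MinS S; have box b : b \in S -> in_box m b by exact: in_box_MinS.
have excess b : b \in S -> \sum_(i < d) (m i < b i : nat) = e - \sum_(i < d) m i.
  by move=> bS; rewrite -(vert b bS) (sum_in_box (box b bS)) addKn.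
have i0 : 'I_d by exists 0; lia.
have [b0 b0S b0_i0] := MinS_attained i0 S_nil.
have t_le : e - \sum_(i < d) m i <= d.-1.
  by rewrite -(excess b0 b0S) (sum_indicator_le_pred (P := fun i => m i < b0 i) (i0 := i0)) // b0_i0 ltnn.
have sum_m : \sum_(i < d) m i <= e.
  by rewrite -(vert b0 b0S) (sum_in_box (box b0 b0S)) leq_addr.
case: (posnP (e - \sum_(i < d) m i)) => [t0|t_gt0].
- have S_m b : b \in S -> forall i, b i = m i.
    by move=> bS; apply: in_box_excess0 (box b bS) _; rewrite excess.
  have [j m_j] : exists j, 0 < m j.
    apply/existsP; apply: contraTT e_ge2; rewrite negb_exists => /forallP m0.
    rewrite -(vert b0 b0S) (eq_bigr (fun=> 0)) ?big1 // => i _.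
    by rewrite S_m //; have := m0 i; rewrite lt0n negbK => /eqP.
  apply: (regular_facet_of_box (f := decr_at m j) (t := 1)); rewrite ?vert //.
  + by apply/andP; split; lia.
  + by rewrite sum_decr_at //; lia.
  + by move=> b bS; apply: in_box_decr_at; exact: S_m.
- apply: (regular_facet_of_box (f := m) (t := e - \sum_(i < d) m i)); rewrite ?vert ?box //.
  + by rewrite t_gt0 t_le.
  + by rewrite subnKC.
Qed.
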